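(* In the setting below, if $\alpha=0$ or $\alpha$ is a limit ordinal, then there exists $x\in M_{\alpha+1}$ such that $\bigcup x\notin M$.
   Context: Work in ZFA (ZF with a set $A$ of atoms, i.e. urelements that have no elements), extended by a primitive binary relation $\preccurlyeq$ on $A$, with Separation and Replacement holding for formulas mentioning $\preccurlyeq$. $A$ is an infinite set of atoms and $\preccurlyeq$ is a pre-ordering (reflexive, transitive) on $A$ with no minimal elements: for every $a\in A$ there is $b\in A$ with $b\preccurlyeq a$ and not $a\preccurlyeq b$. For $a\in A$, $pr(a)=\{b\in A:b\preccurlyeq a\}$; $LO(A,\preccurlyeq)$ is the set of nonempty $x\subseteq A$ with $pr(a)\subseteq x$ for all $a\in x$. For a set $X$ of sets, $LO(X,\subseteq)$ is the set of nonempty $x\subseteq X$ such that for every $y\in x$ and every $z\in X$ with $z\subseteq y$, $z\in x$. The magmatic hierarchy: $M_1=LO(A,\preccurlyeq)$; $M_{\alpha+1}=LO(M_\alpha,\subseteq)$ for $\alpha\geq1$; $M_\alpha=\bigcup_{1\leq\beta<\alpha}M_\beta$ for limit $\alpha$; $M=\bigcup_{\alpha\geq1}M_\alpha$. $\bigcup x=\{z:\exists y\in x\,(z\in y)\}$, where atoms have no elements (so $\bigcup x=\emptyset$ if $x\subseteq A$). *)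

(* We work inside Aczel's type-theoretic model of ZFA:
   well-founded trees whose leaves are atoms (elements of the type A),
   with extensional equality [eqV] and membership [memV]. *)
From Stdlib Require Import List.


Section ZFA.
Variable A : Type.

Inductive V : Type :=
| atom : A -> V
| node : forall I : Type, (I -> V) -> V.

Set Implicit Arguments.

Fixpoint eqV (x y : V) {struct x} : Prop :=
  match x, y with
  | atom a, atom b => a = b
  | node II f, node JJ g =>
      (forall i, exists j, eqV (f i) (g j)) /\ (forall j, exists i, eqV (f i) (g j))
  | _, _ => False
  end.

Definition memV (y x : V) : Prop :=
  match x with
  | atom _ => False
  | node II f => exists i, eqV y (f i)
  end.

Definition isSet (x : V) : Prop :=
  match x with atom _ => False | node _ _ => True end.

Definition nonempty (x : V) : Prop := exists y, memV y x.

Definition subsetV (z y : V) : Prop :=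
  isSet z /\ isSet y /\ forall w, memV w z -> memV w y.

Definition idx (x : V) : Type :=
  match x with atom _ => Empty_set | node II _ => II end.

Definition elt (x : V) : idx x -> V :=
  match x return idx x -> V with
  | atom _ => fun e => match e with end
  | node II f => f
  end.

(** Union: [bigcup x = { z | exists y in x, z in y }]; bigcup of an atom is empty. *)
Definition bigcup (x : V) : V :=
  node {i : idx x & idx (elt x i)} (fun p => elt (elt x (projT1 p)) (projT2 p)).

Definition succV (a : V) : V :=
  node (option (idx a)) (fun o =>
          match o with Some i => elt a i | None => a end).

(** Membership is well-founded in this model, so this is a well-order. *)
Definition Ord (a : V) : Prop :=
  isSet a /\
  (forall y, memV y a -> isSet y /\ forall z, memV z y -> memV z a) /\
  (forall y z, memV y a -> memV z a -> memV y z \/ eqV y z \/ memV z y) /\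
  (forall y z w, memV y a -> memV z a -> memV w a -> memV y z -> memV z w -> memV y w).

Definition isLimit (a : V) : Prop :=
  nonempty a /\ ~ (exists b, Ord b /\ eqV a (succV b)).

Variable le : A -> A -> Prop.

Definition LOA (x : V) : Prop :=
  isSet x /\ nonempty x /\
  (forall y, memV y x -> exists a, eqV y (atom a)) /\
  (forall a b, memV (atom a) x -> le b a -> memV (atom b) x).

Definition LOset (X : V -> Prop) (x : V) : Prop :=
  isSet x /\ nonempty x /\
  (forall y, memV y x -> X y) /\
  (forall y z, memV y x -> X z -> subsetV z y -> memV z x).

(** [Mlev a x] : x ∈ M_a, defined by recursion on (the tree of) the ordinal a:
    - a = 1 (= 0 + 1):                M_1 = LO(A, ≼)
    - a = b + 1 with b ≥ 1:           M_{b+1} = LO(M_b, ⊆)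
    - a limit:                        M_a = ⋃_{1 ≤ b < a} M_b
    (M_0 is empty / undefined; it is never used.) *)
Fixpoint Mlev (a x : V) {struct a} : Prop :=
  match a with
  | atom _ => False
  | node II f =>
      (exists i, (forall j, memV (f j) (f i) \/ eqV (f j) (f i)) /\
                 ~ nonempty (f i) /\ LOA x)
   \/ (exists i, (forall j, memV (f j) (f i) \/ eqV (f j) (f i)) /\
                 nonempty (f i) /\ LOset (fun z => Mlev (f i) z) x)
   \/ ((exists i : II, True) /\
       ~ (exists i, forall j, memV (f j) (f i) \/ eqV (f j) (f i)) /\
       exists i, nonempty (f i) /\ Mlev (f i) x)
  end.

Definition inM (x : V) : Prop := exists a, Ord a /\ nonempty a /\ Mlev a x.

End ZFA.
Arguments node {A} I _.

From Stdlib Require Import List Classical Setoid Morphisms.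

(* For alpha = 0 take x = A: it lies in M_1 = LO(A, ≼), and ⋃x = ∅, while every
   element of M is nonempty.  For alpha a limit, 1 and 2 lie below alpha, so
   M_1 ∪ M_2 ⊆ M_alpha.  The members of M_alpha that are subsets of A ∪ P(A) form
   a member x of LO(M_alpha, ⊆) = M_(alpha+1), and ⋃x contains both an atom
   (through A ∈ M_1) and a set (through LO(A, ≼) ∈ M_2).  But, by induction on the
   level, a member of M containing an atom contains only atoms. *)

Section Extensionality.
Context {A : Type}.
Implicit Types x y z w : V A.

Lemma eqV_refl x : eqV x x.
Proof.
  induction x as [a | I f IH]; simpl; [reflexivity |].
  split; intro i; exists i; apply IH.
Qed.

Lemma eqV_sym x y : eqV x y -> eqV y x.
Proof.
  revert y; induction x as [a | I f IH]; intros [b | J g]; simpl; try tauto.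
  - intros ->; reflexivity.
  - intros [Hfg Hgf]; split.
    + intro j; destruct (Hgf j) as [i Hi]; exists i; now apply IH.
    + intro i; destruct (Hfg i) as [j Hj]; exists j; now apply IH.
Qed.

Lemma eqV_trans x y z : eqV x y -> eqV y z -> eqV x z.
Proof.
  revert y z; induction x as [a | I f IH]; intros [b | J g] [c | K h]; simpl; try tauto.
  - intros -> ->; reflexivity.
  - intros [Hfg Hgf] [Hgh Hhg]; split.
    + intro i; destruct (Hfg i) as [j Hj]; destruct (Hgh j) as [k Hk]; eauto.
    + intro k; destruct (Hhg k) as [j Hj]; destruct (Hgf j) as [i Hi]; eauto.
Qed.

#[global] Instance eqV_Equivalence : Equivalence (@eqV A).
Proof. split; [exact eqV_refl | exact eqV_sym | exact eqV_trans]. Qed.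

Lemma memV_eqV x x' y y' : eqV x x' -> eqV y y' -> memV y x -> memV y' x'.
Proof.
  destruct x as [a | I f], x' as [b | J g]; simpl; try tauto.
  intros [Hfg _] Ey [i Hi]; destruct (Hfg i) as [j Hj].
  exists j; now rewrite <- Ey, Hi.
Qed.

#[global] Instance memV_Proper : Proper (@eqV A ==> @eqV A ==> iff) (@memV A).
Proof. intros y y' Ey x x' Ex; split; apply memV_eqV; easy || now symmetry. Qed.

#[global] Instance nonempty_Proper : Proper (@eqV A ==> iff) (@nonempty A).
Proof. intros x x' E; unfold nonempty; now setoid_rewrite E. Qed.

#[global] Instance isSet_Proper : Proper (@eqV A ==> iff) (@isSet A).
Proof. intros [a | I f] [b | J g]; simpl; tauto. Qed.

#[global] Instance subsetV_Proper : Proper (@eqV A ==> @eqV A ==> iff) (@subsetV A).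
Proof. intros z z' Ez y y' Ey; unfold subsetV; now setoid_rewrite Ez; setoid_rewrite Ey. Qed.

Lemma memV_node {I} (f : I -> V A) i : memV (f i) (node I f).
Proof. exists i; reflexivity. Qed.

Lemma memV_elt x i : memV (elt x i) x.
Proof. destruct x as [a | I f]; [destruct i | apply memV_node]. Qed.

Lemma memV_iff_elt x z : memV z x <-> exists i, eqV z (elt x i).
Proof. destruct x as [a | I f]; simpl; [split; [tauto | intros [[] _]] | reflexivity]. Qed.

Lemma eqV_ext x y : isSet x -> isSet y -> (forall z, memV z x <-> memV z y) -> eqV x y.
Proof.
  destruct x as [a | I f], y as [b | J g]; simpl; try tauto; intros _ _ Hxy; split.
  - intro i; apply Hxy, memV_node.
  - intro j; destruct (proj2 (Hxy (g j)) (memV_node g j)) as [i Hi].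
    exists i; now symmetry.
Qed.

Lemma memV_succV x z : memV z (succV x) <-> memV z x \/ eqV z x.
Proof.
  split.
  - intros [[i |] Hi]; [left; rewrite Hi; apply memV_elt | now right].
  - intros [Hz | Hz]; [| now exists None].
    destruct x as [a | I f]; [destruct Hz |].
    destruct Hz as [i Hi]; now exists (Some i).
Qed.

Lemma succV_nonempty x : nonempty (succV x).
Proof. exists x; rewrite memV_succV; now right. Qed.

Lemma memV_bigcup x z : memV z (bigcup x) <-> exists y, memV y x /\ memV z y.
Proof.
  split.
  - intros [[i j] Hz]; exists (elt x i); split; [apply memV_elt |].
    rewrite Hz; apply memV_elt.
  - destruct x as [a | I f]; intros [y [Hy Hzy]]; [destruct Hy |].
    destruct Hy as [i Hi]; rewrite Hi, memV_iff_elt in Hzy.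
    destruct Hzy as [j Hj]; now exists (existT _ i j).
Qed.

Lemma memV_minimal (P : V A -> Prop) x :
  Proper (@eqV A ==> iff) P -> P x -> exists m, P m /\ forall y, memV y m -> ~ P y.
Proof.
  intros HP; induction x as [a | I f IH]; intros Hx.
  - exists (atom A a); split; [exact Hx | intros y []].
  - destruct (classic (exists i, P (f i))) as [[i Hi] | Hnone]; [now apply (IH i) |].
    exists (node I f); split; [exact Hx |].
    intros y [i Hi] Hy; apply Hnone; exists i; now rewrite <- Hi.
Qed.

End Extensionality.

Section Ordinals.
Context {A : Type}.
Implicit Types a b c x y z : V A.

Definition is_top {I} (f : I -> V A) (i : I) : Prop :=
  forall j, memV (f j) (f i) \/ eqV (f j) (f i).

Lemma Ord_mem_trans {a y z} : Ord a -> memV y a -> memV z y -> memV z a.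
Proof. intros [_ [Htr _]] Hy; apply (Htr y Hy). Qed.

Lemma Ord_mem {a y} : Ord a -> memV y a -> Ord y.
Proof.
  intros Ha Hy; pose proof Ha as [_ [Htr [Htri Hlin]]].
  split; [apply (Htr y Hy) |].
  assert (Hya : forall z, memV z y -> memV z a) by (intro; now apply Ord_mem_trans).
  split; [| split].
  - intros z Hz; split; [apply (Htr z (Hya z Hz)) |].
    intros w Hw; apply (Hlin w z y); auto; now apply (Ord_mem_trans Ha (Hya z Hz)).
  - intros z w Hz Hw; apply Htri; auto.
  - intros u v w Hu Hv Hw; apply Hlin; auto.
Qed.

Lemma Ord_has_empty {a} : Ord a -> nonempty a -> exists z, memV z a /\ ~ nonempty z.
Proof.
  intros Ha [y Hy].
  destruct (memV_minimal (fun z => memV z a) y) as [m [Hm Hmin]]; auto.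
  { intros z z' E; now rewrite E. }
  exists m; split; [exact Hm |].
  intros [z Hz]; apply (Hmin z Hz); now apply (Ord_mem_trans Ha Hm).
Qed.

Lemma limit_no_max {I} {f : I -> V A} :
  Ord (node I f) -> isLimit (node I f) -> ~ exists i, is_top f i.
Proof.
  intros Ha [_ Hlim] [i Hmax]; apply Hlim; exists (f i).
  split; [exact (Ord_mem Ha (memV_node f i)) |].
  apply eqV_ext; [constructor | constructor |]; intro z; rewrite memV_succV; split.
  - intros [j Hj]; now rewrite Hj.
  - intros [Hz | Hz]; [exact (Ord_mem_trans Ha (memV_node f i) Hz) |].
    now rewrite Hz; apply memV_node.
Qed.

Lemma limit_succ_mem {a b} :
  Ord a -> isLimit a -> memV b a -> exists c, memV c a /\ eqV c (succV b).
Proof.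
  intros Ha [_ Hlim] Hb; pose proof Ha as [_ [Htr [Htri Hlin]]].
  assert (Hbelow : forall z, memV z a -> ~ memV b z -> memV z b \/ eqV z b).
  { intros z Hz Hbz; destruct (Htri z b Hz Hb) as [? | [? | ?]]; tauto. }
  destruct (classic (exists c, memV c a /\ memV b c)) as [[c Hc] | Habove].
  - destruct (memV_minimal (fun c => memV c a /\ memV b c) c) as [m [[Hm Hbm] Hmin]];
      [intros ? ? E; now rewrite E | exact Hc |].
    exists m; split; [exact Hm |].
    apply eqV_ext; [apply (Htr m Hm) | constructor |]; intro z; rewrite memV_succV; split.
    + intro Hz; pose proof (Ord_mem_trans Ha Hm Hz) as Hza.
      apply Hbelow; [exact Hza | intro Hbz; exact (Hmin z Hz (conj Hza Hbz))].
    + intros [Hz | ->]; [| exact Hbm].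
      exact (Hlin z b m (Ord_mem_trans Ha Hb Hz) Hb Hm Hz Hbm).
  - exfalso; apply Hlim; exists b; split; [exact (Ord_mem Ha Hb) |].
    apply eqV_ext; [exact (proj1 Ha) | constructor |]; intro z; rewrite memV_succV; split.
    + intro Hz; apply Hbelow; [exact Hz | intro Hbz; apply Habove; now exists z].
    + intros [Hz | ->]; [exact (Ord_mem_trans Ha Hb Hz) | exact Hb].
Qed.

End Ordinals.

Section Levels.
Context {A : Type} (le : A -> A -> Prop).
Implicit Types a b x y z : V A.

#[global] Instance LOA_Proper : Proper (@eqV A ==> iff) (LOA le).
Proof. intros x x' E; unfold LOA; now setoid_rewrite E. Qed.

#[global] Instance LOset_Proper (X : V A -> Prop) : Proper (@eqV A ==> iff) (LOset X).
Proof. intros x x' E; unfold LOset; now setoid_rewrite E. Qed.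

Lemma LOset_ext {X Y : V A -> Prop} {x} : (forall z, X z <-> Y z) -> LOset X x -> LOset Y x.
Proof. intros HXY; unfold LOset; now setoid_rewrite HXY. Qed.

Lemma is_top_eqV {I J} {f : I -> V A} {g : J -> V A} {i j} :
  (forall j', exists i', eqV (f i') (g j')) -> eqV (f i) (g j) -> is_top f i -> is_top g j.
Proof.
  intros Hcover Hij Htop j'; destruct (Hcover j') as [i' Hi'].
  rewrite <- Hi', <- Hij; apply Htop.
Qed.

Lemma Mlev_node_transfer {I J} (f : I -> V A) (g : J -> V A) x :
  (forall i, exists j, eqV (f i) (g j) /\ forall z, Mlev le (f i) z <-> Mlev le (g j) z) ->
  (forall j, exists i, eqV (f i) (g j)) ->
  Mlev le (node I f) x -> Mlev le (node J g) x.
Proof.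
  intros Hfg Hgf; simpl.
  intros [[i [Htop [Hi Hx]]] | [[i [Htop [Hi Hx]]] | [[i _] [Hnotop [i' [Hi' Hx]]]]]].
  - destruct (Hfg i) as [j [Hij _]]; left; exists j.
    split; [exact (is_top_eqV Hgf Hij Htop) | now rewrite <- Hij].
  - destruct (Hfg i) as [j [Hij HM]]; right; left; exists j.
    split; [exact (is_top_eqV Hgf Hij Htop) |].
    split; [now rewrite <- Hij | exact (LOset_ext HM Hx)].
  - right; right; split; [destruct (Hfg i) as [j _]; now exists j |].
    split.
    + intros [j Htop]; apply Hnotop; destruct (Hgf j) as [i0 Hi0]; exists i0.
      refine (is_top_eqV (fun i1 => _) (symmetry Hi0) Htop).
      destruct (Hfg i1) as [j1 [Hj1 _]]; exists j1; now symmetry.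
    + destruct (Hfg i') as [j [Hij HM]]; exists j.
      split; [now rewrite <- Hij | now apply HM].
Qed.

Lemma Mlev_level_eqV a a' x : eqV a a' -> Mlev le a x <-> Mlev le a' x.
Proof.
  revert a' x; induction a as [u | I f IH]; intros [u' | J g] x E; simpl in E; try tauto.
  destruct E as [Hfg Hgf]; split; apply Mlev_node_transfer.
  - intro i; destruct (Hfg i) as [j Hj]; exists j; split; [exact Hj | intro; now apply IH].
  - exact Hgf.
  - intro j; destruct (Hgf j) as [i Hi]; exists i; split; [now symmetry | intro; symmetry; now apply IH].
  - intro i; destruct (Hfg i) as [j Hj]; exists j; now symmetry.
Qed.

Lemma Mlev_elem_eqV a x x' : eqV x x' -> Mlev le a x -> Mlev le a x'.
Proof.
  revert x x'; induction a as [u | I f IH]; intros x x' E; simpl; [tauto |].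
  intros [[i H] | [[i H] | [Hne [Hnotop [i' [Hi' Hx]]]]]].
  - left; exists i; now rewrite <- E.
  - right; left; exists i; now rewrite <- E.
  - right; right; split; [exact Hne |]; split; [exact Hnotop |].
    exists i'; split; [exact Hi' | exact (IH i' x x' E Hx)].
Qed.

#[global] Instance Mlev_Proper : Proper (@eqV A ==> @eqV A ==> iff) (Mlev le).
Proof.
  intros a a' Ea x x' Ex; rewrite (Mlev_level_eqV a a' x Ea).
  split; apply Mlev_elem_eqV; [exact Ex | now symmetry].
Qed.

Lemma Mlev_nonempty {a x} : Mlev le a x -> nonempty x.
Proof.
  revert x; induction a as [u | I f IH]; intro x; simpl; [tauto |].
  intros [[i [_ [_ [_ [Hx _]]]]] | [[i [_ [_ [_ [Hx _]]]]] | [_ [_ [i [_ Hx]]]]]];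
    [exact Hx | exact Hx | exact (IH i x Hx)].
Qed.

Lemma Mlev_atom_homogeneous {a y w} {a0 : A} :
  Mlev le a y -> memV (atom A a0) y -> memV w y -> exists a' : A, eqV w (atom A a').
Proof.
  revert y; induction a as [u | I f IH]; intro y; simpl; [tauto |].
  intros [[i [_ [_ [_ [_ [Hatoms _]]]]]] | [[i [_ [_ [_ [_ [HM _]]]]]] | [_ [_ [i [_ Hy]]]]]] Ha0 Hw.
  - exact (Hatoms w Hw).
  - destruct (Mlev_nonempty (HM _ Ha0)) as [v []].
  - exact (IH i y Hy Ha0 Hw).
Qed.

Lemma succV_top b : is_top (fun o => match o with Some i => elt b i | None => b end) None.
Proof. intros [i |]; [left; apply memV_elt | now right]. Qed.

Lemma Mlev_succ_LOA_iff b x : ~ nonempty b -> Mlev le (succV b) x <-> LOA le x.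
Proof.
  intro Hb; unfold succV; simpl; split.
  - intros [[o [_ [_ Hx]]] | [[o [_ [Ho _]]] | [_ [Hnotop _]]]]; [exact Hx | |].
    + exfalso; destruct o as [i |]; [apply Hb; exists (elt b i); apply memV_elt | contradiction].
    + exfalso; apply Hnotop; exists None; apply succV_top.
  - intro Hx; left; exists None; split; [apply succV_top | split; [exact Hb | exact Hx]].
Qed.

Lemma Mlev_succ_LOset b x : nonempty b -> LOset (Mlev le b) x -> Mlev le (succV b) x.
Proof.
  intros Hb Hx; unfold succV; simpl; right; left; exists None.
  split; [apply succV_top | split; [exact Hb | exact Hx]].
Qed.

Lemma Mlev_limit {a b x} :
  Ord a -> isLimit a -> memV b a -> nonempty b -> Mlev le b x -> Mlev le a x.
Proof.
  intros Ha Hlim Hba Hb Hx; destruct a as [u | I f]; [destruct Ha as [[] _] |].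
  destruct Hba as [i Hi]; simpl; right; right.
  split; [now exists i | split; [exact (limit_no_max Ha Hlim) |]].
  exists i; now rewrite <- Hi.
Qed.

Lemma Mlev_limit_LOA {a x} : Ord a -> isLimit a -> LOA le x -> Mlev le a x.
Proof.
  intros Ha Hlim Hx.
  destruct (Ord_has_empty Ha (proj1 Hlim)) as [z [Hz Hz0]].
  destruct (limit_succ_mem Ha Hlim Hz) as [c [Hc Ec]].
  apply (Mlev_limit Ha Hlim Hc); rewrite Ec; [apply succV_nonempty |].
  now apply Mlev_succ_LOA_iff.
Qed.

Lemma Mlev_limit_LOset {a x} : Ord a -> isLimit a -> LOset (LOA le) x -> Mlev le a x.
Proof.
  intros Ha Hlim Hx.
  destruct (Ord_has_empty Ha (proj1 Hlim)) as [z [Hz Hz0]].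
  destruct (limit_succ_mem Ha Hlim Hz) as [c1 [Hc1 Ec1]].
  destruct (limit_succ_mem Ha Hlim Hc1) as [c2 [Hc2 Ec2]].
  apply (Mlev_limit Ha Hlim Hc2); rewrite Ec2; [apply succV_nonempty |].
  apply Mlev_succ_LOset; [rewrite Ec1; apply succV_nonempty |].
  refine (LOset_ext _ Hx); intro y; now rewrite Ec1, Mlev_succ_LOA_iff.
Qed.

Lemma bigcup_LOA_not_inM x : LOA le x -> ~ inM le (bigcup x).
Proof.
  intros [_ [_ [Hatoms _]]] [b [_ [_ HM]]].
  destruct (Mlev_nonempty HM) as [z Hz]; apply memV_bigcup in Hz as [y [Hy Hzy]].
  destruct (Hatoms y Hy) as [a E]; rewrite E in Hzy; exact Hzy.
Qed.

Lemma mixed_not_inM y z (a0 : A) : memV (atom A a0) y -> memV z y -> isSet z -> ~ inM le y.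
Proof.
  intros Ha0 Hz Hset [b [_ [_ Hy]]].
  destruct (Mlev_atom_homogeneous Hy Ha0 Hz) as [a E]; rewrite E in Hset; exact Hset.
Qed.

End Levels.

Section Codes.
Context {A : Type} (le : A -> A -> Prop).
Implicit Types x y z w : V A.

Definition imageV {J} (F : J -> V A) (Q : J -> Prop) : V A :=
  node {j | Q j} (fun p => F (proj1_sig p)).

Lemma memV_imageV {J} (F : J -> V A) Q y : memV y (imageV F Q) <-> exists j, Q j /\ eqV y (F j).
Proof.
  split; [intros [[j Hj] E]; now exists j |].
  intros [j [Hj E]]; now exists (exist _ j Hj).
Qed.

Lemma eqV_imageV {J} {F : J -> V A} {z} :
  isSet z -> (forall w, memV w z -> exists j, eqV w (F j)) ->
  eqV z (imageV F (fun j => memV (F j) z)).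
Proof.
  intros Hz HF; apply eqV_ext; [exact Hz | constructor |]; intro w.
  rewrite memV_imageV; split.
  - intro Hw; destruct (HF w Hw) as [j E]; exists j; split; [now rewrite <- E | exact E].
  - intros [j [Hj E]]; now rewrite E.
Qed.

Definition atoms (P : A -> Prop) : V A := imageV (atom A) P.

Definition LOAp (P : A -> Prop) : Prop :=
  (exists a, P a) /\ (forall a b, P a -> le b a -> P b).

Definition LOA_set : V A := imageV atoms LOAp.

Lemma atom_mem_atoms (P : A -> Prop) a : P a -> memV (atom A a) (atoms P).
Proof. intro Ha; apply memV_imageV; now exists a. Qed.

Lemma LOA_atoms P : LOAp P -> LOA le (atoms P).
Proof.
  intros [[a Ha] Hdown]; split; [constructor | split; [| split]].
  - exists (atom A a); now apply atom_mem_atoms.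
  - intros y Hy; apply memV_imageV in Hy as [a' [_ E]]; now exists a'.
  - intros a' b Ha' Hb; apply memV_imageV in Ha' as [c [Hc E]]; simpl in E; subst c.
    apply atom_mem_atoms; exact (Hdown a' b Hc Hb).
Qed.

Lemma atoms_mem_LOA_set P : LOAp P -> memV (atoms P) LOA_set.
Proof. intro HP; apply memV_imageV; now exists P. Qed.

Lemma LOA_eqV_atoms {x} :
  LOA le x -> LOAp (fun a => memV (atom A a) x) /\ eqV x (atoms (fun a => memV (atom A a) x)).
Proof.
  intros [Hset [[y Hy] [Hatoms Hdown]]]; split; [split |].
  - destruct (Hatoms y Hy) as [a E]; exists a; now rewrite <- E.
  - exact Hdown.
  - now apply eqV_imageV.
Qed.

Lemma LOset_LOA_set (a0 : A) : LOset (LOA le) LOA_set.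
Proof.
  split; [constructor | split; [| split]].
  - exists (atoms (fun _ => True)); apply atoms_mem_LOA_set.
    split; [now exists a0 | trivial].
  - intros y Hy; apply memV_imageV in Hy as [P [HP E]]; rewrite E; now apply LOA_atoms.
  - intros y z _ Hz _; destruct (LOA_eqV_atoms Hz) as [HP E].
    rewrite E; now apply atoms_mem_LOA_set.
Qed.

Definition code (j : A + (A -> Prop)) : V A :=
  match j with inl a => atom A a | inr P => atoms P end.

Definition codes (Q : A + (A -> Prop) -> Prop) : V A := imageV code Q.

(* The members of M_alpha that are subsets of A ∪ P(A).  M_alpha itself cannot be
   collected into a set here: its index type would range over [V A] and so live in
   a higher universe. *)
Definition Mlev_codes (alpha : V A) : V A := imageV codes (fun Q => Mlev le alpha (codes Q)).

Lemma Mlev_codes_mem alpha z :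
  Mlev le alpha z -> isSet z -> (forall w, memV w z -> exists j, eqV w (code j)) ->
  memV z (Mlev_codes alpha).
Proof.
  intros Hz Hset Hcodes; pose proof (eqV_imageV Hset Hcodes) as E.
  apply memV_imageV; eexists; split; [| exact E].
  now rewrite <- E.
Qed.

Lemma LOset_Mlev_codes alpha :
  nonempty (Mlev_codes alpha) -> LOset (Mlev le alpha) (Mlev_codes alpha).
Proof.
  intro Hne; split; [constructor | split; [exact Hne | split]].
  - intros y Hy; apply memV_imageV in Hy as [Q [HQ E]]; now rewrite E.
  - intros y z Hy Hz Hzy; apply memV_imageV in Hy as [Q [_ E]]; rewrite E in Hzy.
    destruct Hzy as [Hset [_ Hsub]].
    apply Mlev_codes_mem; [exact Hz | exact Hset |].
    intros w Hw; apply Hsub, memV_imageV in Hw as [j [_ Ej]]; now exists j.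
Qed.

Lemma atoms_mem_Mlev_codes {alpha P} :
  Ord alpha -> isLimit alpha -> LOAp P -> memV (atoms P) (Mlev_codes alpha).
Proof.
  intros Halpha Hlim HP; apply Mlev_codes_mem.
  - apply (Mlev_limit_LOA le Halpha Hlim), LOA_atoms, HP.
  - constructor.
  - intros w Hw; apply memV_imageV in Hw as [a [_ E]]; now exists (inl a).
Qed.

Lemma LOA_set_mem_Mlev_codes (a0 : A) {alpha} :
  Ord alpha -> isLimit alpha -> memV LOA_set (Mlev_codes alpha).
Proof.
  intros Halpha Hlim; apply Mlev_codes_mem.
  - apply (Mlev_limit_LOset le Halpha Hlim), (LOset_LOA_set a0).
  - constructor.
  - intros w Hw; apply memV_imageV in Hw as [P [_ E]]; now exists (inr P).
Qed.

End Codes.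

Theorem fact4p13 (A : Type) (le : A -> A -> Prop)
  (le_refl : forall a, le a a)
  (le_trans : forall a b c, le a b -> le b c -> le a c)
  (A_infinite : forall l : list A, exists a, ~ In a l)
  (no_min : forall a, exists b, le b a /\ ~ le a b)
  (alpha : V A) (Halpha : Ord alpha)
  (Hzl : ~ nonempty alpha \/ isLimit alpha) :
  exists x, Mlev le (succV alpha) x /\ ~ inM le (bigcup x).
Proof.
  destruct (A_infinite nil) as [a0 _].
  assert (Htrue : LOAp le (fun _ : A => True)) by (split; [now exists a0 | trivial]).
  destruct Hzl as [Hzero | Hlim].
  - exists (atoms (fun _ => True)); split.
    + apply Mlev_succ_LOA_iff, LOA_atoms, Htrue; exact Hzero.
    + apply bigcup_LOA_not_inM, LOA_atoms, Htrue.
  - pose proof (atoms_mem_Mlev_codes le Halpha Hlim Htrue) as Hall.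
    pose proof (LOA_set_mem_Mlev_codes le a0 Halpha Hlim) as HLOA.
    exists (Mlev_codes le alpha); split.
    + apply Mlev_succ_LOset; [exact (proj1 Hlim) |].
      apply LOset_Mlev_codes; eexists; exact Hall.
    + apply (mixed_not_inM le _ (atoms (fun _ => True)) a0); [| | constructor].
      * apply memV_bigcup; eexists; split; [exact Hall | now apply atom_mem_atoms].
      * apply memV_bigcup; eexists; split; [exact HLOA | now apply atoms_mem_LOA_set].
Qed.
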